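(* Let $\mathbb{K}$ be algebraically closed of characteristic zero, $T$ a torus and $V=\bigoplus_{i=1}^nV_i$ a $T$-module with $V_i\cong\mathbb K$ of weight $s_i\in X^*(T)$. Then $(T,V)$ is visible if and only if there is a partition $\{1,\dots,n\}=\bigsqcup_{j=0}^l I_j$ (with $l\ge0$, $I_0$ possibly empty) such that: (i) $\langle s_i\mid 1\le i\le n\rangle=\bigoplus_{j=0}^l\langle s_i\mid i\in I_j\rangle$; (ii) $\dim\langle s_i\mid i\in I_0\rangle=\#I_0$ and $\dim\langle s_i\mid i\in I_j\rangle=\#I_j-1$ for $j\ge1$; (iii) $0\in CH^{\circ}(\{s_i\mid i\in I_j\})$ for every $j\ge1$.
   Context: $(T,V)$ is visible if $V$ contains finitely many nilpotent $T$-orbits ($x$ nilpotent means $0\in\overline{T\cdot x}$). Spans $\langle\cdot\rangle$ are taken in $X^*(T)\otimes_{\mathbb Z}\mathbb Q$. $CH^{\circ}(A)$ is the set of convex combinations $\sum_{a\in A}\alpha_aa$ with all $\alpha_a>0$. *)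

From HB Require Import structures.
From mathcomp Require Import all_boot all_order all_algebra.
From mathcomp Require Import mpoly.
From Stdlib Require Lists.List.
Set Implicit Arguments. Unset Strict Implicit. Unset Printing Implicit Defensive.
Import Order.TTheory GRing.Theory Num.Theory.
Local Open Scope ring_scope.

(* Torus T = (K^x)^r ; characters X^*(T) = Z^r ; a weight s : 'I_r -> int
   acts by t |-> prod_k (t k)^(s k). *)
Definition torus (K : fieldType) (r : nat) (t : 'I_r -> K) : Prop :=
  forall k, t k != 0.

Definition char_eval (K : fieldType) (r : nat) (s : 'I_r -> int) (t : 'I_r -> K) : K :=
  \prod_(k < r) (t k) ^ (s k).

Definition tact (K : fieldType) (r n : nat) (s : 'I_n -> 'I_r -> int)
  (t : 'I_r -> K) (x : 'I_n -> K) : 'I_n -> K :=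
  fun i => char_eval (s i) t * x i.

Definition orbit (K : fieldType) (r n : nat) (s : 'I_n -> 'I_r -> int)
  (x : 'I_n -> K) : ('I_n -> K) -> Prop :=
  fun y => exists t, torus t /\ y = tact s t x.

Definition zclosure (K : fieldType) (n : nat) (S : ('I_n -> K) -> Prop)
  : ('I_n -> K) -> Prop :=
  fun x => forall p : {mpoly K[n]}, (forall y, S y -> p.@[y] = 0) -> p.@[x] = 0.

Definition nilpotent (K : fieldType) (r n : nat) (s : 'I_n -> 'I_r -> int)
  (x : 'I_n -> K) : Prop :=
  zclosure (orbit s x) (fun _ => 0).

Definition visible (K : fieldType) (r n : nat) (s : 'I_n -> 'I_r -> int) : Prop :=
  exists xs : seq ('I_n -> K),
    forall x, nilpotent s x -> exists2 y, Stdlib.Lists.List.In y xs & orbit s y x.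

(* weights s_i (i in I) as rows of a rational matrix; its row space is
   the Q-span <s_i | i in I> in X^*(T) (x) Q = Q^r *)
Definition wmx (r n : nat) (s : 'I_n -> 'I_r -> int) (I : {set 'I_n}) : 'M[rat]_(n, r) :=
  \matrix_(i, k) (if i \in I then (s i k)%:~R else 0).

Definition zero_in_open_hull (r n : nat) (s : 'I_n -> 'I_r -> int) (I : {set 'I_n}) : Prop :=
  exists a : 'I_n -> rat,
    (forall i, i \in I -> 0 < a i) /\ \sum_(i in I) a i = 1 /\
    (forall k, \sum_(i in I) a i * (s i k)%:~R = 0).

From Pilot Require Import Defs.
From HB Require Import structures.
From mathcomp Require Import all_boot all_order all_algebra.
From mathcomp Require Import mpoly.
From mathcomp Require Import ring lra zify.
From Stdlib Require Import Classical ClassicalEpsilon FunctionalExtensionality.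
Import Order.TTheory GRing.Theory Num.Theory.
Local Open Scope ring_scope.

Set Implicit Arguments. Unset Strict Implicit. Unset Printing Implicit Defensive.

(* A relation is a vector m with sum_i m_i s_i = 0; a set J of indices is free if no
   nonzero relation is supported in J, and acyclic if no nonzero nonnegative one is.
   Both sides of the equivalence say that every acyclic J is free.

   If (T,V) is visible and the weights of J are positive on a cocharacter, every point
   supported on J is nilpotent, while a nonzero integral relation M supported on J gives
   the invariant Laurent monomial prod_i x_i^M_i, which takes infinitely many values on
   these points; by Gordan's alternative an acyclic J lies in such a half-space, so it is
   free. Conversely, a nilpotent point x has no invariant monomial with nonnegative
   exponents on its support J (it would vanish at 0 but not at x), so J is acyclic, hence
   free, and T acts transitively on the points with support J: the 0/1 vectors represent
   all nilpotent orbits.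

   Every nonzero relation has a sign-conformal one of minimal support (a circuit). When
   acyclic sets are free, every circuit is nonnegative up to sign and two nonnegative
   circuits that meet have the same support. These supports are the blocks I_1, ..., I_l
   and I_0 is the rest: relations split along the blocks (i), I_0 is free and each other
   block carries a one-dimensional space of relations spanned by a positive one (ii, iii). *)

(** * Gordan's alternative *)

Section Gordan.
Variable R : realFieldType.

Lemma exists_separating (I : finType) (P Q : pred I) (F : I -> R) :
  (forall p q, P p -> Q q -> F p < F q) ->
  exists mu, (forall p, P p -> F p < mu) /\ (forall q, Q q -> mu < F q).
Proof.
move=> ltPQ.
pose top := \big[Order.max/0]_(p | P p) F p + 1.
pose hi := \big[Order.min/top]_(q | Q q) F q.
pose lo := \big[Order.max/(hi - 1)]_(p | P p) F p.
have lt_hi p : P p -> F p < hi.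
  move=> Pp; apply/bigmin_gtP; split=> [|q Qq]; last exact: ltPQ.
  have := le_bigmax_cond 0 F Pp; rewrite /top; lra.
have lo_lt_hi : lo < hi by apply/bigmax_ltP; split=> [|p /lt_hi //]; lra.
exists ((lo + hi) / 2); split=> [p Pp | q Qq].
  have := le_bigmax_cond (hi - 1) F Pp; rewrite -/lo; lra.
have := bigmin_le_cond top F Qq; rewrite -/hi; lra.
Qed.

Lemma sum_delta (I : finType) (p : I) (F : I -> R) :
  \sum_i (i == p)%:R * F i = F p.
Proof.
under eq_bigr do rewrite mulr_natl mulrb.
by rewrite -big_mkcond big_pred1_eq.
Qed.

(* Fourier-Motzkin elimination of the coordinate a: the vectors a_p v_q - a_q v_p for
   a_p > 0 > a_q, and v_j for a_j = 0, written as nonnegative combinations of the v_i. *)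
Section FourierMotzkin.
Variables (I : finType) (a : I -> R).

Definition fm_valid (x : (I * I) + I) : bool :=
  match x with inl (p, q) => (0 < a p) && (a q < 0) | inr j => a j == 0 end.

Definition fm_coef (x : (I * I) + I) (i : I) : R :=
  match x with
  | inl (p, q) => (i == p)%:R * - a q + (i == q)%:R * a p
  | inr j => (i == j)%:R
  end.

Definition fm_comb (x : (I * I) + I) (F : I -> R) : R :=
  match x with inl (p, q) => a p * F q - a q * F p | inr j => F j end.

Lemma fm_coefE x F : \sum_i fm_coef x i * F i = fm_comb x F.
Proof.
case: x => [[p q]|j] /=; last exact: sum_delta.
under eq_bigr do rewrite mulrDl -!mulrA.
by rewrite big_split /= !sum_delta; ring.
Qed.

Lemma fm_coef_ge0 x i : fm_valid x -> 0 <= fm_coef x i.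
Proof.
case: x => [[p q] /andP[ap_gt0 aq_lt0]|j _] /=; last exact: ler0n.
by rewrite addr_ge0 ?mulr_ge0 ?ler0n //; lra.
Qed.

Lemma fm_coef_neq0 x : fm_valid x -> exists i, 0 < fm_coef x i.
Proof.
case: x => [[p q] /andP[ap_gt0 aq_lt0]|j _] /=; last by exists j; rewrite eqxx ltr01.
have /negPf pq : p != q by apply: contraTneq ap_gt0 => ->; rewrite -leNgt ltW.
by exists p; rewrite eqxx pq mul1r mul0r addr0; lra.
Qed.

Lemma fm_comb_id x : fm_valid x -> fm_comb x a = 0.
Proof. by case: x => [[p q] _|j /eqP] /=; [rewrite mulrC subrr|]. Qed.

End FourierMotzkin.

Section EliminateLastCoordinate.
Variables (r : nat) (I : finType) (v : I -> 'I_r.+1 -> R).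
Let a i := v i ord_max.

Definition fm_vec (x : {x | fm_valid a x}) (k : 'I_r) : R :=
  \sum_i fm_coef a (val x) i * v i (lift ord_max k).

Lemma fm_positive (lam' : 'I_r -> R) : (forall x, 0 < \sum_k lam' k * fm_vec x k) ->
  exists lam : 'I_r.+1 -> R, forall i, 0 < \sum_k lam k * v i k.
Proof.
move=> lam'_pos; pose g i := \sum_k lam' k * v i (lift ord_max k).
have g_pos x : fm_valid a x -> 0 < fm_comb a x g.
  move=> xP; rewrite -fm_coefE.
  suff -> : \sum_i fm_coef a x i * g i = \sum_k lam' k * fm_vec (exist _ x xP) k by [].
  rewrite /g /fm_vec; under eq_bigr do rewrite mulr_sumr; rewrite exchange_big /=.
  apply: eq_bigr => k _; rewrite mulr_sumr; apply: eq_bigr => i _; ring.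
have [mu [mu_gt mu_lt]] :
    exists mu, (forall p, 0 < a p -> - g p / a p < mu) /\
               (forall q, a q < 0 -> mu < - g q / a q).
  apply: exists_separating => p q ap_gt0 aq_lt0.
  have /= := g_pos (inl (p, q)); rewrite ap_gt0 aq_lt0 => /(_ isT) comb_gt0.
  have -> : - g q / a q = - g p / a p + (a p * g q - a q * g p) / - (a p * a q).
    by field; rewrite (gt_eqF ap_gt0) (lt_eqF aq_lt0).
  by rewrite ltrDl divr_gt0 // oppr_gt0 pmulr_rlt0.
exists (fun k => if unlift ord_max k is Some k' then lam' k' else mu) => i.
rewrite (bigD1_ord ord_max) //= unlift_none.
under eq_bigr do rewrite liftK.
rewrite -/(g i) -/(a i).
have [ai_lt0|ai_gt0|ai0] := ltrgtP (a i) 0.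
- by have := mu_lt i ai_lt0; rewrite ltr_ndivlMr //; lra.
- by have := mu_gt i ai_gt0; rewrite ltr_pdivrMr //; lra.
- by have := g_pos (inr i); rewrite /= ai0 eqxx mulr0 add0r; apply.
Qed.

Lemma fm_nonneg_relation (m' : {x | fm_valid a x} -> R) :
  [/\ forall x, 0 <= m' x, exists x, 0 < m' x & forall k, \sum_x m' x * fm_vec x k = 0] ->
  exists m : I -> R,
    [/\ forall i, 0 <= m i, exists i, 0 < m i & forall k, \sum_i m i * v i k = 0].
Proof.
case=> m'_ge0 [x0 m'x0_gt0] m'_rel; pose m i := \sum_x m' x * fm_coef a (val x) i.
have term_ge0 x i : 0 <= m' x * fm_coef a (val x) i.
  by rewrite mulr_ge0 ?m'_ge0 ?fm_coef_ge0 ?(valP x).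
exists m; split=> [i|| k]; first exact: sumr_ge0.
  have [i0 coef_gt0] := fm_coef_neq0 (valP x0); exists i0.
  by rewrite /m (bigD1 x0) //= ltr_pwDl ?mulr_gt0 ?sumr_ge0.
have -> : \sum_i m i * v i k = \sum_x m' x * fm_comb a (val x) (v^~ k).
  rewrite /m; under eq_bigr do rewrite mulr_suml; rewrite exchange_big /=.
  by apply: eq_bigr => x _; rewrite -fm_coefE mulr_sumr; apply: eq_bigr => i _; rewrite mulrA.
case: (unliftP ord_max k) => [k'|] ->.
  by rewrite -[RHS](m'_rel k'); apply: eq_bigr => x _; rewrite -fm_coefE.
by apply: big1 => -[x xP] _; rewrite /= fm_comb_id ?mulr0.
Qed.

End EliminateLastCoordinate.

Theorem gordan (r : nat) (I : finType) (v : I -> 'I_r -> R) :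
  (exists lam : 'I_r -> R, forall i, 0 < \sum_k lam k * v i k) \/
  (exists m : I -> R,
     [/\ forall i, 0 <= m i, exists i, 0 < m i & forall k, \sum_i m i * v i k = 0]).
Proof.
elim: r I v => [|r IHr] I v.
  case: (pickP (@predT I)) => [i0 _|I0]; last by left; exists (fun _ => 0) => i; have := I0 i.
  right; exists (fun i => (i == i0)%:R); split=> [i|| [] //]; first exact: ler0n.
  by exists i0; rewrite eqxx ltr01.
have [[lam' /fm_positive]|[m' /fm_nonneg_relation]] := IHr _ (fm_vec (v := v)); by [left | right].
Qed.

End Gordan.

(** * Relations and circuits of a vector configuration *)

Definition asbool (P : Prop) : bool := if excluded_middle_informative P then true else false.

Lemma asboolP (P : Prop) : reflect P (asbool P).
Proof. by rewrite /asbool; case: excluded_middle_informative => p; constructor. Qed.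

Section Relations.
Variables (R : realFieldType) (n r : nat) (v : 'I_n -> 'I_r -> R).
Implicit Types (a b c d m z : 'I_n -> R) (J S : {set 'I_n}).

Definition wrel m := forall k, \sum_i m i * v i k = 0.

Definition supp m : {set 'I_n} := [set i | m i != 0].

Definition circuit z :=
  [/\ wrel z, supp z != set0 & forall m, wrel m -> supp m \proper supp z -> supp m = set0].

Definition conforms z c := forall i, z i != 0 -> 0 < z i * c i.

Definition wfree J := forall m, wrel m -> supp m \subset J -> supp m = set0.

Definition acyclic J :=
  forall m, wrel m -> (forall i, 0 <= m i) -> supp m \subset J -> supp m = set0.

Definition positive_on J :=
  exists lam : 'I_r -> R, forall i, i \in J -> 0 < \sum_k lam k * v i k.

Definition restrict m S i := if i \in S then m i else 0.

Lemma wrel_ext m1 m2 : m1 =1 m2 -> wrel m1 -> wrel m2.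
Proof. by move=> eq_m rel1 k; rewrite -[RHS](rel1 k); apply: eq_bigr => i _; rewrite eq_m. Qed.

Lemma wrel_lin x y m1 m2 : wrel m1 -> wrel m2 -> wrel (fun i => x * m1 i + y * m2 i).
Proof.
move=> rel1 rel2 k; under eq_bigr do rewrite mulrDl -!mulrA.
by rewrite big_split /= -!mulr_sumr rel1 rel2 !mulr0 addr0.
Qed.

Lemma wrel_sub x m1 m2 : wrel m1 -> wrel m2 -> wrel (fun i => m1 i - x * m2 i).
Proof.
move=> rel1 rel2; apply: wrel_ext (wrel_lin 1 (- x) rel1 rel2) => i.
by rewrite mul1r mulNr.
Qed.

Lemma in_supp m i : (i \in supp m) = (m i != 0).
Proof. by rewrite inE. Qed.

Lemma supp_eq0 m : supp m = set0 <-> m =1 (fun _ => 0).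
Proof.
split=> [m0 i|m0]; last by apply/setP => i; rewrite in_supp in_set0 m0 eqxx.
by apply/eqP; rewrite -[_ == _]negbK -in_supp m0 in_set0.
Qed.

Lemma notin_supp m i : i \notin supp m -> m i = 0.
Proof. by rewrite in_supp negbK => /eqP. Qed.

Lemma supp_restrict m S : supp (restrict m S) \subset S.
Proof. by apply/subsetP => i; rewrite in_supp /restrict; case: ifP; rewrite ?eqxx. Qed.

Lemma conforms_supp z c : conforms z c -> supp z \subset supp c.
Proof.
move=> zc; apply/subsetP => i; rewrite !in_supp => /zc.
by apply: contraTneq => ->; rewrite mulr0 ltxx.
Qed.

Lemma conforms_trans z c d : conforms z c -> conforms c d -> conforms z d.
Proof.
move=> zc cd i zi0; have zci := zc i zi0.
have /cd cdi : c i != 0 by apply: contraTneq zci => ->; rewrite mulr0 ltxx.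
have ci : c i != 0 by apply: contraTneq cdi => ->; rewrite mul0r ltxx.
have -> : z i * d i = (z i * c i) * (c i * d i) / c i ^+ 2 by field.
by apply: divr_gt0; [exact: mulr_gt0 | rewrite exprn_even_gt0 //= ci].
Qed.

Lemma card_supp_sub_lt m c i : supp m \subset supp c :\ i -> i \in supp c ->
  (#|supp m| < #|supp c|)%N.
Proof.
move=> sub_mc ic; apply: leq_ltn_trans (subset_leq_card sub_mc) _.
by rewrite (cardsD1 i (supp c)) ic.
Qed.

Lemma conforming_elimination c d i1 : (forall i, c i = 0 -> d i = 0) -> 0 < d i1 * c i1 ->
  exists t j0, [/\ 0 < t, j0 \in supp c, c j0 = t * d j0 & conforms (fun i => c i - t * d i) c].
Proof.
move=> cd0 dci1_gt0; pose P i := 0 < d i * c i.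
have [j0 Pj0 min_j0] : exists2 j0, 0 < d j0 * c j0 &
    forall i, 0 < d i * c i -> c j0 / d j0 <= c i / d i.
  by case: (@arg_minP _ _ _ i1 P (fun i => c i / d i) dci1_gt0) => j; exists j.
have dj0 : d j0 != 0 by apply: contraTneq Pj0 => ->; rewrite mul0r ltxx.
have cj0 : c j0 != 0 by apply: contraTneq Pj0 => ->; rewrite mulr0 ltxx.
pose t := c j0 / d j0.
have t_gt0 : 0 < t.
  have -> : t = (d j0 * c j0) / (d j0 ^+ 2) by rewrite /t; field.
  by apply: divr_gt0; rewrite // exprn_even_gt0 //= dj0.
exists t, j0; split; rewrite ?in_supp ?[t * _]divfK // => i c'i.
have ci : c i != 0 by apply: contra c'i => /eqP ci0; rewrite ci0 cd0 // mulr0 subrr.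
rewrite lt_neqAle eq_sym mulf_neq0 //=.
have [Pi|notPi] := ltrP 0 (d i * c i).
  have di : d i != 0 by apply: contraTneq Pi => ->; rewrite mul0r ltxx.
  have -> : (c i - t * d i) * c i = (d i * c i) * (c i / d i - t) by field.
  by apply: mulr_ge0; [exact: ltW | rewrite subr_ge0; exact: min_j0].
have -> : (c i - t * d i) * c i = c i ^+ 2 - t * (d i * c i) by ring.
by rewrite subr_ge0; apply: le_trans (sqr_ge0 (c i)); rewrite pmulr_rle0.
Qed.

Lemma exists_smaller_conforming c d : wrel c -> wrel d ->
  supp d \proper supp c -> supp d != set0 ->
  exists c', [/\ wrel c', conforms c' c, (#|supp c'| < #|supp c|)%N & supp c' != set0].
Proof.
move=> relc reld dc d_neq0.
have cd0 i : c i = 0 -> d i = 0.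
  move=> ci0; apply: notin_supp; apply/negP => /(subsetP (proper_sub dc)).
  by rewrite in_supp ci0 eqxx.
wlog [i1 dci1_gt0] : d reld dc d_neq0 cd0 / exists i, 0 < d i * c i.
  move=> W; have [i1 i1d] := set0Pn _ d_neq0.
  have [dci1_gt0|dci1_le0] := ltrP 0 (d i1 * c i1); first by apply: (W d) => //; exists i1.
  have suppN : supp (fun i => - d i) = supp d by apply/setP => i; rewrite !in_supp oppr_eq0.
  apply: (W (fun i => - d i)); rewrite ?suppN //.
  - by apply: wrel_ext (wrel_lin (-1) 0 reld reld) => i; ring.
  - by move=> i /cd0 ->; rewrite oppr0.
  have ci1 : c i1 != 0 by apply: contraTneq i1d => /cd0 di10; rewrite in_supp di10 eqxx.
  by exists i1; rewrite mulNr oppr_gt0 lt_neqAle dci1_le0 andbT mulf_neq0 // -in_supp.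
have [t [j0 [t_gt0 j0c cj0 c'c]]] := conforming_elimination cd0 dci1_gt0.
exists (fun i => c i - t * d i); split=> //; first exact: wrel_sub.
  apply: (@card_supp_sub_lt _ _ j0) => //.
  apply/subsetP => i; rewrite in_supp !inE => c'i; apply/andP; split.
    by apply: contraNneq c'i => ->; rewrite cj0 subrr.
  by apply: contra c'i => /eqP ci0; rewrite ci0 cd0 // mulr0 subrr.
apply: contraTneq dc => /supp_eq0 c'_eq0.
suff -> : supp d = supp c by rewrite properxx.
apply/setP => i; rewrite !in_supp; move/eqP: (c'_eq0 i); rewrite subr_eq0 => /eqP ->.
by rewrite mulf_eq0 negb_or (gt_eqF t_gt0).
Qed.

Lemma exists_conforming_circuit c : wrel c -> supp c != set0 ->
  exists2 z, circuit z & conforms z c.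
Proof.
move: {2}#|supp c| (leqnn #|supp c|) => N; elim: N c => [|N IHN] c.
  by rewrite leqn0 cards_eq0 => /eqP -> _; rewrite eqxx.
move=> le_cN relc c_neq0.
case: (classic (exists d, [/\ wrel d, supp d \proper supp c & supp d != set0])).
  case=> d [reld dc d_neq0].
  have [c' [relc' c'c lt_c'c c'_neq0]] := exists_smaller_conforming relc reld dc d_neq0.
  have [|z zcirc zc'] := IHN c' _ relc' c'_neq0; first exact: leq_trans lt_c'c le_cN.
  by exists z => //; apply: conforms_trans c'c.
move=> no_d; exists c => [|i ci]; last by rewrite lt_def mulf_neq0 // -expr2 sqr_ge0.
split=> // m relm mc; apply: NNPP => /eqP m_neq0.
by apply: no_d; exists m.
Qed.

Lemma circuit_unique z m i0 : circuit z -> wrel m -> supp m \subset supp z ->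
  i0 \in supp z -> forall i, m i = m i0 / z i0 * z i.
Proof.
case=> relz _ z_min relm mz i0z.
have zi0 : z i0 != 0 by rewrite -in_supp.
pose m' i := m i - m i0 / z i0 * z i.
suff /supp_eq0 m'0 : supp m' = set0 by move=> i; apply/eqP; rewrite -subr_eq0; apply/eqP/m'0.
apply: z_min; first exact: wrel_sub.
apply/properP; split; last by exists i0; rewrite // in_supp /m' divfK // subrr eqxx.
apply/subsetP => i; rewrite !in_supp => m'i; apply: contraNneq m'i => zi_0.
rewrite /m' zi_0 mulr0 subr0; apply/eqP/notin_supp/negP => /(subsetP mz).
by rewrite in_supp zi_0 eqxx.
Qed.

Lemma acyclic_positive_on J : acyclic J -> positive_on J.
Proof.
move=> acycJ; pose vJ (x : {i | i \in J}) k := v (val x) k.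
have [[lam lam_pos]|[m [m_ge0 [x0 mx0_gt0] relm]]] := gordan vJ.
  by exists lam => i iJ; apply: (lam_pos (exist _ i iJ)).
pose m' i := \sum_(x | val x == i) m x.
have m'x0_gt0 : 0 < m' (val x0).
  by rewrite /m' (bigD1 x0) //= ltr_pwDl // sumr_ge0.
suff /supp_eq0 /(_ (val x0)) : supp m' = set0 by move/eqP; rewrite gt_eqF.
apply: acycJ => [k|i|].
- rewrite -[RHS](relm k) (partition_big val xpredT) //=; apply: eq_bigr => i _.
  by rewrite mulr_suml; apply: eq_bigr => x /eqP <-.
- by rewrite /m'; apply: sumr_ge0.
apply/subsetP => i; rewrite in_supp; apply: contraR => iJ.
by rewrite /m' big_pred0 // => x; apply: contraNF iJ => /eqP <-; apply: valP.
Qed.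

Section AcyclicFree.
Hypothesis acyclic_free : forall J, acyclic J -> wfree J.

Lemma circuit_nonneg z : circuit z ->
  exists a, [/\ circuit a, supp a = supp z & forall i, 0 <= a i].
Proof.
move=> zcirc; have [relz z_neq0 z_min] := zcirc.
have [m [relm m_ge0 m_neq0 mz]] : exists m,
    [/\ wrel m, forall i, 0 <= m i, supp m != set0 & supp m \subset supp z].
  apply: NNPP => no_m; have acyc : acyclic (supp z).
    by move=> m relm m_ge0 mz; apply: NNPP => /eqP m_neq0; apply: no_m; exists m.
  by move: z_neq0; rewrite (acyclic_free acyc relz) ?eqxx.
have [i0 i0m] := set0Pn _ m_neq0.
have m_z := circuit_unique zcirc relm mz (subsetP mz _ i0m).
have supp_mz : supp m = supp z.
  have coef_neq0 : m i0 / z i0 != 0.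
    by rewrite mulf_neq0 ?invr_eq0 -?in_supp // (subsetP mz).
  by apply/setP => i; rewrite !in_supp m_z mulf_eq0 negb_or coef_neq0.
exists m; split => //; split => //; rewrite supp_mz //.
Qed.

Lemma circuit_sign z : circuit z -> (forall i, 0 <= z i) \/ (forall i, z i <= 0).
Proof.
move=> zcirc; have [a [acirc supp_az a_ge0]] := circuit_nonneg zcirc.
have [relz _ _] := zcirc; have [_ a_neq0 _] := acirc.
have [i0 i0a] := set0Pn _ a_neq0.
have za : supp z \subset supp a by rewrite supp_az.
have z_a := circuit_unique acirc relz za i0a.
have [coef_ge0|coef_lt0] := lerP 0 (z i0 / a i0); [left|right] => i; rewrite z_a.
  exact: mulr_ge0.
exact: mulr_le0_ge0 (ltW coef_lt0) (a_ge0 i).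
Qed.

Lemma nonneg_circuit_supp_eq a b e : circuit a -> circuit b ->
  (forall i, 0 <= a i) -> (forall i, 0 <= b i) ->
  e \in supp a -> e \in supp b -> supp a = supp b.
Proof.
move=> acirc bcirc a_ge0 b_ge0 ea eb.
have [rela _ a_min] := acirc; have [relb _ b_min] := bcirc.
have ae_gt0 : 0 < a e by rewrite lt_def -in_supp ea a_ge0.
have be_gt0 : 0 < b e by rewrite lt_def -in_supp eb b_ge0.
apply: NNPP => ab_neq.
pose c i := b e * a i - a e * b i.
have relc : wrel c.
  by apply: wrel_ext (wrel_lin (b e) (- a e) rela relb) => i; rewrite /c mulNr.
have c_neq0 : supp c != set0.
  apply/negP => /eqP /supp_eq0 c0; apply: ab_neq; apply/setP => i; rewrite !in_supp.
  have -> : a i = a e / b e * b i.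
    move/eqP: (c0 i); rewrite subr_eq0 => /eqP ce.
    have be0 : b e != 0 by rewrite gt_eqF.
    by rewrite -[a i](mulKf be0) ce; field.
  have coef_neq0 : a e / b e != 0 by rewrite mulf_neq0 ?invr_eq0 ?gt_eqF.
  by rewrite mulf_eq0 negb_or coef_neq0.
have [z zcirc zc] := exists_conforming_circuit relc c_neq0.
have [relz z_neq0 _] := zcirc.
have ez : e \notin supp z.
  rewrite in_supp negbK; apply: contraT => ze.
  by have := zc e ze; rewrite /c [b e * _]mulrC subrr mulr0 ltxx.
have [z_ge0|z_le0] := circuit_sign zcirc.
- move: z_neq0; rewrite (a_min z relz) ?eqxx //.
  apply/properP; split; last by exists e.
  apply/subsetP => i; rewrite !in_supp => zi.
  have zi_gt0 : 0 < z i by rewrite lt_def zi z_ge0.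
  have := zc i zi; rewrite pmulr_rgt0 // subr_gt0.
  by apply: contraTneq => ->; rewrite mulr0 -leNgt mulr_ge0 // ltW.
- move: z_neq0; rewrite (b_min z relz) ?eqxx //.
  apply/properP; split; last by exists e.
  apply/subsetP => i; rewrite !in_supp => zi.
  have zi_lt0 : z i < 0 by rewrite lt_neqAle zi z_le0.
  have := zc i zi; rewrite nmulr_rgt0 // subr_lt0.
  by apply: contraTneq => ->; rewrite mulr0 -leNgt mulr_ge0 // ltW.
Qed.

Definition nonneg_circuit_supp S := exists a, [/\ circuit a, supp a = S & forall i, 0 <= a i].

Definition circuit_supps : {set {set 'I_n}} := [set S | asbool (nonneg_circuit_supp S)].

Definition block0 : {set 'I_n} := ~: \bigcup_(S in circuit_supps) S.

(* [block ord0] is the paper's I_0; the other blocks enumerate the circuit supports. *)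
Definition block (j : 'I_#|circuit_supps|.+1) : {set 'I_n} :=
  if unlift ord0 j is Some j' then enum_val j' else block0.

Lemma circuit_suppsP S : reflect (nonneg_circuit_supp S) (S \in circuit_supps).
Proof. by rewrite inE; apply: asboolP. Qed.

Lemma circuit_supps_disjoint S S' : S \in circuit_supps -> S' \in circuit_supps ->
  S != S' -> [disjoint S & S'].
Proof.
move=> /circuit_suppsP[a [acirc <- a_ge0]] /circuit_suppsP[b [bcirc <- b_ge0]] ab_neq.
apply/pred0P => e /=; apply/negP => /andP[ea eb].
by move: ab_neq; rewrite (nonneg_circuit_supp_eq acirc bcirc a_ge0 b_ge0 ea eb) eqxx.
Qed.

Lemma circuit_supp_block0 S : S \in circuit_supps -> [disjoint S & block0].
Proof.
move=> SC; apply/pred0P => i /=; rewrite inE andbC; apply/negP => /andP[/negP + iS].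
by apply; apply/bigcupP; exists S.
Qed.

Lemma circuit_supp_block S j : S \in circuit_supps -> S = block j \/ [disjoint S & block j].
Proof.
move=> SC; rewrite /block; case: (unliftP ord0 j) => [j'|] _; last first.
  by right; apply: circuit_supp_block0.
have [->|neq] := eqVneq S (enum_val j'); [by left | right].
by apply: circuit_supps_disjoint => //; apply: enum_valP.
Qed.

Lemma block_disjoint j1 j2 : j1 != j2 -> [disjoint block j1 & block j2].
Proof.
rewrite /block; case: (unliftP ord0 j1) => [j1'|] ->; case: (unliftP ord0 j2) => [j2'|] ->.
- rewrite (inj_eq lift_inj) => neq; apply: circuit_supps_disjoint; try exact: enum_valP.
  by apply: contra neq => /eqP /enum_val_inj ->.
- by move=> _; apply: circuit_supp_block0; apply: enum_valP.
- by move=> _; rewrite disjoint_sym; apply: circuit_supp_block0; apply: enum_valP.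
- by rewrite eqxx.
Qed.

Lemma bigcup_block : \bigcup_j block j = [set: 'I_n].
Proof.
apply/setP => i; rewrite inE; apply/bigcupP.
have [i0|] := boolP (i \in block0); first by exists ord0; rewrite //= /block unlift_none.
rewrite inE negbK => /bigcupP[S SC iS].
by exists (lift ord0 (enum_rank_in SC S)); rewrite //= /block liftK enum_rankK_in.
Qed.

Lemma block_nonneg_circuit j : j != ord0 -> nonneg_circuit_supp (block j).
Proof.
rewrite /block; case: (unliftP ord0 j) => [j'|] -> //= _.
by apply/circuit_suppsP; apply: enum_valP.
Qed.

Lemma wrel_restrict_block m j : wrel m -> wrel (restrict m (block j)).
Proof.
(* Peel off a nonnegative circuit inside supp m: its support is either block j or
   disjoint from it, so it restricts to itself or to 0. *)
have restrict0 m' : supp m' = set0 -> wrel (restrict m' (block j)).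
  by move=> /supp_eq0 m'0 k; apply: big1 => i _; rewrite /restrict m'0 if_same mul0r.
move: {2}#|supp m| (leqnn #|supp m|) => N; elim: N m => [|N IHN] m le_mN relm.
  by apply: restrict0; apply/eqP; rewrite -cards_eq0 -leqn0.
have [/restrict0 //|m_neq0] := eqVneq (supp m) set0.
have [z zcirc zm] := exists_conforming_circuit relm m_neq0.
have [a [acirc supp_az a_ge0]] := circuit_nonneg zcirc.
have [rela a_neq0 _] := acirc.
have am : supp a \subset supp m by rewrite supp_az; apply: conforms_supp.
have [i0 i0a] := set0Pn _ a_neq0.
pose m' i := m i - m i0 / a i0 * a i.
have relm' : wrel m' by apply: wrel_sub.
have lt_m'm : (#|supp m'| < #|supp m|)%N.
  apply: (@card_supp_sub_lt _ _ i0); last exact: subsetP am _ i0a.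
  apply/subsetP => i; rewrite in_supp !inE /m' => m'i; apply/andP; split.
    by apply: contraNneq m'i => ->; rewrite divfK ?subrr // -in_supp.
  apply: contra m'i => /eqP mi0.
  have /notin_supp -> : i \notin supp a by apply/negP => /(subsetP am); rewrite in_supp mi0 eqxx.
  by rewrite mi0 mulr0 subrr.
have relm'_blk := IHN m' (leq_trans lt_m'm le_mN) relm'.
have rela_blk : wrel (restrict a (block j)).
  have aC : supp a \in circuit_supps by apply/circuit_suppsP; exists a.
  case: (circuit_supp_block j aC) => [<-|/pred0P a_blk].
    by apply: wrel_ext rela => i; rewrite /restrict; case: ifP => // /negbT /notin_supp.
  apply: wrel_ext (wrel_lin 0 0 rela rela) => i; rewrite /restrict !mul0r addr0.
  by case: ifP => // ij; apply/esym/notin_supp; have := a_blk i; rewrite /= ij andbT => ->.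
apply: wrel_ext (wrel_lin 1 (m i0 / a i0) relm'_blk rela_blk) => i.
by rewrite /restrict /m'; case: ifP => _; rewrite ?mulr0 ?addr0 // mul1r subrK.
Qed.

Lemma wfree_block0 : wfree block0.
Proof.
move=> m relm m0; apply: NNPP => /eqP m_neq0.
have [z zcirc zm] := exists_conforming_circuit relm m_neq0.
have [a [acirc supp_az a_ge0]] := circuit_nonneg zcirc.
have aC : supp a \in circuit_supps by apply/circuit_suppsP; exists a.
have [_ a_neq0 _] := acirc; have [i ia] := set0Pn _ a_neq0.
have ib0 : i \in block0 by apply/(subsetP m0)/(subsetP (conforms_supp zm)); rewrite -supp_az.
by move/pred0P: (circuit_supp_block0 aC) => /(_ i); rewrite /= ia ib0.
Qed.

End AcyclicFree.

End Relations.

(** * Weight matrices *)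

Lemma mxdirect_sums_mulP (F : fieldType) (m n l : nat) (A : 'I_l -> 'M[F]_(m, n)) :
  mxdirect (\sum_j <<A j>>) <->
  (forall u : 'I_l -> 'rV_m, \sum_j u j *m A j = 0 -> forall j, u j *m A j = 0).
Proof.
split=> [/mxdirect_sumsP dirA u sum_u0 j | uniqA].
  apply/eqP; rewrite -submx0 -(dirA j isT) sub_capmx genmxE submxMl /=.
  apply/sub_sums_genmxP; exists (fun j' => - u j').
  move/eqP: sum_u0; rewrite (bigD1 j) //= addr_eq0 => /eqP ->.
  by rewrite -sumrN; apply: eq_bigr => j' _; rewrite mulNmx.
apply/mxdirect_sumsP => j _ /=; apply/eqP; rewrite -submx0; apply/row_subP => i.
have /[!sub_capmx] /andP[] := row_sub i (<<A j>> :&: \sum_(j' | j' != j) <<A j'>>)%MS.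
rewrite genmxE => /submxP[D rowD] /sub_sums_genmxP[u rowu].
pose U j' := if j' == j then - D else u j'.
have sumU0 : \sum_j' U j' *m A j' = 0.
  rewrite (bigD1 j) //= /U eqxx mulNmx -rowD rowu -addrC.
  by apply/eqP; rewrite subr_eq0; apply/eqP/eq_bigr => j' /negbTE ->.
by move/eqP: (uniqA U sumU0 j); rewrite /U eqxx mulNmx oppr_eq0 -rowD submx0.
Qed.

Section WeightMatrix.
Variables (R : realFieldType) (n r : nat) (v : 'I_n -> 'I_r -> R).
Implicit Types (a m : 'I_n -> R) (S : {set 'I_n}).

Definition wmatrix S : 'M[R]_(n, r) := \matrix_(i, k) (if i \in S then v i k else 0).

Lemma wmatrix_mul0 S (u : 'rV_n) : u *m wmatrix S = 0 <-> wrel v (restrict (u 0) S).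
Proof.
have uS k : (u *m wmatrix S) 0 k = \sum_i restrict (u 0) S i * v i k.
  by rewrite mxE; apply: eq_bigr => i _; rewrite mxE /restrict; case: ifP; rewrite ?mulr0 ?mul0r.
by split=> [u0 k|relu]; [rewrite -uS u0 mxE | apply/rowP => k; rewrite uS relu mxE].
Qed.

Lemma wmatrix_sum l (I : 'I_l -> {set 'I_n}) :
  (forall j1 j2, j1 != j2 -> [disjoint I j1 & I j2]) -> \bigcup_j I j = [set: 'I_n] ->
  wmatrix [set: 'I_n] = \sum_j wmatrix (I j).
Proof.
move=> disjI coverI; apply/matrixP => i k; rewrite summxE !mxE in_setT.
have /bigcupP[j _ ij] : i \in \bigcup_j I j by rewrite coverI in_setT.
rewrite (bigD1 j) //= big1 ?addr0 => [|j' neq]; first by rewrite mxE ij.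
by rewrite mxE; move/pred0P: (disjI _ _ neq) => /(_ i) /=; rewrite ij andbT => ->.
Qed.

Lemma wmatrix_subT S : (wmatrix S <= wmatrix [set: 'I_n])%MS.
Proof.
suff -> : wmatrix S = diag_mx (\row_i (i \in S)%:R) *m wmatrix [set: 'I_n] by apply: submxMl.
by apply/matrixP => i k; rewrite mul_diag_mx !mxE in_setT; case: ifP; rewrite ?mul1r ?mul0r.
Qed.

Section SupportMatrix.
Variable S : {set 'I_n}.

Definition supp_mx : 'M[R]_(#|S|, r) := \matrix_(j, k) v (enum_val j) k.

Definition ext (u : 'rV[R]_#|S|) i : R := \sum_(j | enum_val j == i) u 0 j.

Definition res m : 'rV[R]_#|S| := \row_j m (enum_val j).

Lemma supp_mx_mul0 u : u *m supp_mx = 0 <-> wrel v (ext u).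
Proof.
have uS k : (u *m supp_mx) 0 k = \sum_i ext u i * v i k.
  rewrite mxE (partition_big (@enum_val _ (mem S)) xpredT) //=; apply: eq_bigr => i _.
  by rewrite /ext mulr_suml; apply: eq_bigr => j /eqP <-; rewrite mxE.
by split=> [u0 k|relu]; [rewrite -uS u0 mxE | apply/rowP => k; rewrite uS relu mxE].
Qed.

Lemma supp_ext u : supp (ext u) \subset S.
Proof.
apply/subsetP => i; apply: contraTT => iS; rewrite in_supp negbK /ext big_pred0 // => j.
by apply: contraNF iS => /eqP <-; apply: enum_valP.
Qed.

Lemma res_ext u : res (ext u) = u.
Proof.
apply/rowP => j; rewrite mxE /ext (bigD1 j) //= big1 ?addr0 ?ord1 // => j' /andP[/eqP eqj neq].
by move: neq; rewrite (enum_val_inj eqj) eqxx.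
Qed.

Lemma ext_res m : ext (res m) =1 restrict m S.
Proof.
move=> i; rewrite /ext /restrict; case: ifP => iS; last first.
  by rewrite big_pred0 // => j; apply: contraFF iS => /eqP <-; apply: enum_valP.
rewrite (bigD1 (enum_rank_in iS i)) /= ?enum_rankK_in // big1 ?addr0 => [|j /andP[/eqP eqj]].
  by rewrite mxE enum_rankK_in.
by have := enum_valK_in iS j; rewrite eqj => ->; rewrite eqxx.
Qed.

Lemma res_neq0 m i : i \in S -> m i != 0 -> res m != 0.
Proof.
move=> iS mi; apply: contra mi => /eqP /rowP /(_ (enum_rank_in iS i)).
by rewrite !mxE enum_rankK_in // => ->.
Qed.

Lemma res_wrel m : wrel v m -> supp m \subset S -> res m *m supp_mx = 0.
Proof.
move=> relm mS; apply/supp_mx_mul0; apply: wrel_ext relm => i; rewrite ext_res /restrict.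
by case: ifP => // /negbT iS; apply: notin_supp; apply: contra iS => /(subsetP mS).
Qed.

Lemma rank_wmatrix : \rank (wmatrix S) = \rank supp_mx.
Proof.
apply/eqmx_rank/andP; split; apply/row_subP => i.
  have [iS|iS] := boolP (i \in S); last first.
    suff -> : row i (wmatrix S) = 0 by apply: sub0mx.
    by apply/rowP => k; rewrite !mxE (negbTE iS).
  suff -> : row i (wmatrix S) = row (enum_rank_in iS i) supp_mx by apply: row_sub.
  by apply/rowP => k; rewrite !mxE enum_rankK_in // iS.
suff -> : row i supp_mx = row (enum_val i) (wmatrix S) by apply: row_sub.
by apply/rowP => k; rewrite !mxE enum_valP.
Qed.

Lemma wfree_rank : wfree v S <-> \rank (wmatrix S) = #|S|.
Proof.
rewrite rank_wmatrix; split=> [freeS|/eqP freeS].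
  apply/eqP/inj_row_free => u /supp_mx_mul0 relu.
  have /supp_eq0 ext0 := freeS _ relu (supp_ext u).
  by rewrite -(res_ext u); apply/rowP => j; rewrite !mxE ext0.
move=> m relm mS; apply/supp_eq0 => i.
have [iS|iS] := boolP (i \in S); last by apply: notin_supp; apply: contra iS => /(subsetP mS).
apply/eqP; apply: contraT => mi.
have /eqP := res_wrel relm mS; rewrite (mulmx_free_eq0 _ freeS) => /eqP res0.
by move: (res_neq0 iS mi); rewrite res0 eqxx.
Qed.

Lemma circuit_rank a : circuit v a -> supp a = S -> (\rank (wmatrix S)).+1 = #|S|.
Proof.
move=> acirc supp_a; have [rela a_neq0 _] := acirc.
have [i0 i0a] := set0Pn _ a_neq0; have i0S : i0 \in S by rewrite -supp_a.
have ker_a : (kermx supp_mx == res a)%MS.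
  apply/andP; split; last by apply/sub_kermxP; apply: res_wrel; rewrite ?supp_a.
  apply/row_subP => i; set u := row i _.
  have relu : wrel v (ext u) by apply/supp_mx_mul0; rewrite -row_mul mulmx_ker row0.
  have uS : supp (ext u) \subset supp a by rewrite supp_a; apply: supp_ext.
  apply/sub_rVP; exists (ext u i0 / a i0); apply/rowP => j.
  by rewrite -{1}(res_ext u) !mxE (circuit_unique acirc relu uS i0a).
have := mxrank_ker supp_mx; rewrite (eqmx_rank ker_a) rank_rV (res_neq0 i0S) -?in_supp //.
by rewrite rank_wmatrix; have := rank_leq_row supp_mx; lia.
Qed.

Lemma rank_circuit_multiple a m : (\rank (wmatrix S)).+1 = #|S| ->
  wrel v a -> supp a = S -> wrel v m -> supp m \subset S -> exists x, forall i, m i = x * a i.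
Proof.
move=> rankS rela supp_a relm mS.
have [i0 i0a] : exists i0, i0 \in supp a.
  by apply/set0Pn/eqP => a0; move: rankS; rewrite -supp_a a0 cards0.
have i0S : i0 \in S by rewrite -supp_a.
have res_ker : (res a <= kermx supp_mx)%MS by apply/sub_kermxP/res_wrel; rewrite ?supp_a.
have ker_res : (kermx supp_mx <= res a)%MS.
  rewrite -(mxrank_leqif_sup res_ker).2 rank_rV (res_neq0 i0S) -?in_supp //.
  by rewrite mxrank_ker -rank_wmatrix -rankS subSnn.
have /sub_rVP[x res_m] : (res m <= res a)%MS.
  by apply: submx_trans ker_res; apply/sub_kermxP/res_wrel.
exists x => i; have [iS|iS] := boolP (i \in S).
  by move/rowP: res_m => /(_ (enum_rank_in iS i)); rewrite !mxE enum_rankK_in.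
have /notin_supp -> : i \notin supp m by apply: contra iS => /(subsetP mS).
by rewrite notin_supp ?mulr0 ?supp_a.
Qed.
End SupportMatrix.

End WeightMatrix.

(** * The partition into circuit blocks *)

Section Partition.
Variables (R : realFieldType) (n r : nat) (v : 'I_n -> 'I_r -> R).

Definition origin_in_open_hull (J : {set 'I_n}) :=
  exists a : 'I_n -> R, (forall i, i \in J -> 0 < a i) /\ \sum_(i in J) a i = 1 /\
    (forall k, \sum_(i in J) a i * v i k = 0).

Definition circuit_partition l (I : 'I_l.+1 -> {set 'I_n}) :=
  (forall j1 j2, j1 != j2 -> [disjoint I j1 & I j2]) /\
  (\bigcup_(j < l.+1) I j = [set: 'I_n]) /\
  (wmatrix v [set: 'I_n] == (\sum_(j < l.+1) <<wmatrix v (I j)>>)%MS)%MS /\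
  mxdirect (\sum_(j < l.+1) <<wmatrix v (I j)>>)%MS /\
  \rank (wmatrix v (I ord0)) = #|I ord0| /\
  (forall j : 'I_l.+1, j != ord0 -> (\rank (wmatrix v (I j))).+1 = #|I j|) /\
  (forall j : 'I_l.+1, j != ord0 -> origin_in_open_hull (I j)).

Lemma nonneg_circuit_open_hull S : nonneg_circuit_supp v S -> origin_in_open_hull S.
Proof.
case=> a [[rela a_neq0 _] <- a_ge0].
have a_gt0 i : i \in supp a -> 0 < a i by move=> ia; rewrite lt_def -in_supp ia a_ge0.
have sum_gt0 : 0 < \sum_(i in supp a) a i.
  have [i0 i0a] := set0Pn _ a_neq0.
  by rewrite (bigD1 i0) //= ltr_pwDl ?a_gt0 ?sumr_ge0.
exists (fun i => a i / \sum_(i in supp a) a i); split=> [i /a_gt0 ai|]; first exact: divr_gt0.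
split=> [|k]; first by rewrite -mulr_suml divff ?gt_eqF.
under eq_bigr do rewrite mulrAC; rewrite -mulr_suml.
suff -> : \sum_(i in supp a) a i * v i k = 0 by rewrite mul0r.
rewrite -[RHS](rela k) [RHS](bigID (mem (supp a))) /= [X in _ + X]big1 ?addr0 //.
by move=> i /notin_supp ->; rewrite mul0r.
Qed.

Lemma open_hull_nonneg_wrel S : origin_in_open_hull S ->
  exists a, [/\ wrel v a, forall i, 0 <= a i & supp a = S].
Proof.
case=> a [a_gt0 [_ rela]]; exists (restrict a S); split.
- move=> k; rewrite -[RHS](rela k) [RHS]big_mkcond; apply: eq_bigr => i _.
  by rewrite /restrict; case: ifP; rewrite ?mul0r.
- by move=> i; rewrite /restrict; case: ifP => // /a_gt0 /ltW.
apply/setP => i; rewrite in_supp /restrict.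
by case: ifP => [/a_gt0 /gt_eqF -> | _]; rewrite ?eqxx.
Qed.

Section Blocks.
Variables (l : nat) (I : 'I_l -> {set 'I_n}).
Hypotheses (disjI : forall j1 j2, j1 != j2 -> [disjoint I j1 & I j2])
  (coverI : \bigcup_j I j = [set: 'I_n]).

Lemma eqmx_wmatrix_blocks : (wmatrix v [set: 'I_n] == \sum_j <<wmatrix v (I j)>>)%MS.
Proof.
apply/andP; split; last by apply/sumsmx_subP => j _; rewrite genmxE wmatrix_subT.
by rewrite (wmatrix_sum v disjI coverI); apply: summx_sub_sums => j _; rewrite genmxE.
Qed.

Lemma restrict_sum_blocks (u : 'I_l -> 'I_n -> R) j :
  restrict (fun i => \sum_j' restrict (u j') (I j') i) (I j) =1 restrict (u j) (I j).
Proof.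
move=> i; rewrite /restrict; case: ifP => // ij.
rewrite (bigD1 j) //= ij big1 ?addr0 // => j' neq; case: ifP => // ij'.
by move/pred0P: (disjI neq) => /(_ i); rewrite /= ij ij'.
Qed.

Lemma mxdirect_wmatrix_blocksP :
  mxdirect (\sum_j <<wmatrix v (I j)>>) <->
  (forall m, wrel v m -> forall j, wrel v (restrict m (I j))).
Proof.
rewrite mxdirect_sums_mulP; split=> [uniqW m relm j | blockW u sum_u0 j].
  have sum0 : \sum_j (\row_i m i) *m wmatrix v (I j) = 0.
    rewrite -mulmx_sumr -(wmatrix_sum v disjI coverI); apply/wmatrix_mul0.
    by apply: wrel_ext relm => i; rewrite /restrict in_setT mxE.
  by move/wmatrix_mul0: (uniqW _ sum0 j); apply: wrel_ext => i; rewrite /restrict mxE.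
pose m i := \sum_j restrict (u j 0) (I j) i.
have relm : wrel v m.
  move=> k; have /rowP/(_ k) := sum_u0; rewrite summxE !mxE => sum_k.
  rewrite -[RHS]sum_k; under [RHS]eq_bigr do rewrite mxE.
  rewrite exchange_big /=; apply: eq_bigr => i _; rewrite /m mulr_suml.
  by apply: eq_bigr => j' _; rewrite !mxE /restrict; case: ifP; rewrite ?mulr0 ?mul0r.
by apply/wmatrix_mul0; apply: wrel_ext (blockW _ relm j); apply: restrict_sum_blocks.
Qed.

End Blocks.

Lemma acyclic_free_partition : (forall J, acyclic v J -> wfree v J) ->
  exists l (I : 'I_l.+1 -> {set 'I_n}), circuit_partition I.
Proof.
move=> acf; exists #|circuit_supps v|, (@block _ _ _ v).
have disjB := block_disjoint acf; have coverB := bigcup_block v.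
split=> //; split=> //; split; first exact: eqmx_wmatrix_blocks.
split; first by apply/mxdirect_wmatrix_blocksP => // m relm j; apply: wrel_restrict_block.
split; first by apply/wfree_rank; rewrite /block unlift_none; apply: wfree_block0.
split=> j j0; have := block_nonneg_circuit j0; last exact: nonneg_circuit_open_hull.
by case=> a [acirc supp_a _]; apply: circuit_rank acirc supp_a.
Qed.

Lemma partition_acyclic_free l (I : 'I_l.+1 -> {set 'I_n}) :
  circuit_partition I -> forall J, acyclic v J -> wfree v J.
Proof.
case=> disjI [coverI [_ [dirI [rank0 [rankI hullI]]]]] J acycJ m relm mJ.
have blockm := proj1 (mxdirect_wmatrix_blocksP disjI coverI) dirI m relm.
have restrict0 j : supp (restrict m (I j)) = set0.
  have [->|j0] := eqVneq j ord0.
    exact: (proj2 (wfree_rank v _) rank0 _ (blockm _) (supp_restrict _ _)).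
  have [a [rela a_ge0 supp_a]] := open_hull_nonneg_wrel (hullI j j0).
  have [x mx] := rank_circuit_multiple (rankI j j0) rela supp_a (blockm j) (supp_restrict _ _).
  have [x0|x_neq0] := eqVneq x 0; first by apply/supp_eq0 => i; rewrite mx x0 mul0r.
  have aJ : supp a \subset J.
    apply/subsetP => i ia; apply/(subsetP mJ); have := mx i.
    by rewrite /restrict -supp_a ia in_supp => ->; rewrite mulf_neq0 // -in_supp.
  by move: (rankI j j0); rewrite -supp_a (acycJ a rela a_ge0 aJ) cards0.
apply/supp_eq0 => i; have /bigcupP[j _ ij] : i \in \bigcup_(j < l.+1) I j.
  by rewrite coverI in_setT.
by have /supp_eq0 := restrict0 j; move/(_ i); rewrite /restrict ij.
Qed.

End Partition.

Section FieldPowers.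
Variable F : fieldType.

Lemma prod_exprz (I : Type) (r : seq I) (P : pred I) (x : F) (e : I -> int) :
  x != 0 -> \prod_(i <- r | P i) x ^ e i = x ^ (\sum_(i <- r | P i) e i).
Proof.
by move=> x0; apply/esym/(big_morph (fun z : int => x ^ z)); [move=> ? ?; apply: expfzDr|].
Qed.

Lemma exprz_prod (I : Type) (r : seq I) (P : pred I) (f : I -> F) (e : int) :
  (\prod_(i <- r | P i) f i) ^ e = \prod_(i <- r | P i) f i ^ e.
Proof.
by apply: (big_morph (fun x : F => x ^ e)); [move=> ? ?; apply: expfzMl | apply: exp1rz].
Qed.

Lemma prod_exprz_exchange (A B : finType) (z : B -> F) (G : A -> B -> int) (e : A -> int) :
  (forall b, z b != 0) ->
  \prod_a (\prod_b z b ^ G a b) ^ e a = \prod_b z b ^ (\sum_a G a b * e a).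
Proof.
move=> z0; under eq_bigr do rewrite exprz_prod; under eq_bigr do under eq_bigr do rewrite exprz_exp.
by rewrite exchange_big /=; apply: eq_bigr => b _; apply: prod_exprz.
Qed.

Hypothesis F0 : [pchar F] =i pred0.

Lemma pchar0_natf_inj : injective (fun m : nat => m%:R : F).
Proof.
move: F0 => /pcharf0P natf0 m1 m2 /= eq_m.
wlog le_m : m1 m2 eq_m / (m1 <= m2)%N => [W|].
  by case/orP: (leq_total m1 m2) => /W; [apply | move=> ->].
by apply/eqP; rewrite eqn_leq le_m /= -subn_eq0 -natf0 natrB // eq_m subrr.
Qed.

Lemma pchar0_poly_eq0 (p : {poly F}) : (forall k, p.[k.+1%:R] = 0) -> p = 0.
Proof.
move=> p_roots; apply: contraTeq isT => p_neq0.
pose rs := [seq (k.+1%:R : F) | k <- iota 0 (size p)].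
have rs_roots : all (root p) rs by apply/allP => _ /mapP[k _ ->]; apply/rootP.
have rs_uniq : uniq rs.
  by rewrite map_inj_uniq ?iota_uniq // => k1 k2 /pchar0_natf_inj [].
by have := max_poly_roots p_neq0 rs_roots rs_uniq; rewrite size_map size_iota ltnn.
Qed.

Lemma pchar0_natS_exprz_inj (e : int) : e != 0 -> injective (fun k : nat => (k.+1%:R : F) ^ e).
Proof.
move=> e0 k1 k2 /=; case: e e0 => p p0 eq_k.
  have p_gt0 : (0 < p)%N by case: p p0 {eq_k}.
  by move: eq_k; rewrite -!exprnP -!natrX => /pchar0_natf_inj /(expIn p_gt0) [].
by move: eq_k => /invr_inj; rewrite -!natrX => /pchar0_natf_inj /(expIn (ltn0Sn p)) [].
Qed.

End FieldPowers.

Lemma closed_field_nth_root (K : closedFieldType) (d : nat) (y : K) :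
  (0 < d)%N -> exists z, z ^+ d = y.
Proof.
move=> d_gt0; have /closed_rootP[z] : size ('X^d - y%:P) != 1 by rewrite size_XnsubC //= -lt0n.
by rewrite rootE !hornerE subr_eq0 => /eqP; exists z.
Qed.

(** * Nilpotent orbits of the torus *)

Lemma clear_denominators (I : finType) (f : I -> rat) :
  exists2 d : int, 0 < d & exists F : I -> int, forall i, (F i)%:~R = d%:~R * f i.
Proof.
exists (\prod_i denq (f i)); first by apply: prodr_gt0 => i _; apply: denq_gt0.
exists (fun i => numq (f i) * \prod_(j | j != i) denq (f j)) => i.
rewrite /= intrM numqE rmorph_prod [in RHS]rmorph_prod [in RHS](bigD1 i) //=.
ring.
Qed.

Lemma In_map_mem (T : eqType) (U : Type) (f : T -> U) (s : seq T) x :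
  x \in s -> List.In (f x) (map f s).
Proof. by elim: s => //= y s IHs; rewrite inE => /orP[/eqP->|/IHs]; [left | right]. Qed.

Lemma mem_map_In (U : Type) (V : eqType) (f : U -> V) (s : seq U) y :
  List.In y s -> f y \in map f s.
Proof. by elim: s => //= z s IHs [->|/IHs]; rewrite inE ?eqxx // => ->; rewrite orbT. Qed.

Definition ratw (n r : nat) (s : 'I_n -> 'I_r -> int) : 'I_n -> 'I_r -> rat :=
  fun i k => (s i k)%:~R.

Section TorusAction.
Variables (K : closedFieldType) (n r : nat) (s : 'I_n -> 'I_r -> int).

Lemma int_wrel_of_scaled (m : 'I_n -> rat) (d : int) (M : 'I_n -> int) :
  wrel (ratw s) m -> (forall i, (M i)%:~R = d%:~R * m i) ->
  forall k, \sum_i s i k * M i = 0.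
Proof.
move=> relm M_m k; apply: (@intr_inj rat); rewrite rmorph_sum rmorph0 /=.
transitivity (d%:~R * \sum_i m i * ratw s i k); last by rewrite relm mulr0.
by rewrite mulr_sumr; apply: eq_bigr => i _; rewrite intrM M_m /ratw; ring.
Qed.

Lemma char_eval_wrel (t : 'I_r -> K) (M : 'I_n -> int) : torus t ->
  (forall k, \sum_i s i k * M i = 0) -> \prod_i char_eval (s i) t ^ M i = 1.
Proof.
by move=> tT relM; rewrite prod_exprz_exchange //; apply: big1 => k _; rewrite relM expr0z.
Qed.

Lemma orbit_monomial (M : 'I_n -> int) (x y : 'I_n -> K) :
  (forall k, \sum_i s i k * M i = 0) -> Defs.orbit s x y -> \prod_i y i ^ M i = \prod_i x i ^ M i.
Proof.
move=> relM [t [tT ->]]; rewrite /tact; under eq_bigr do rewrite expfzMl.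
by rewrite big_split /= char_eval_wrel // mul1r.
Qed.

Lemma nilpotent_nonneg_int_wrel (x : 'I_n -> K) (M : 'I_n -> nat) : nilpotent s x ->
  (forall k, \sum_i s i k * (M i)%:Z = 0) -> (forall i, (0 < M i)%N -> x i != 0) ->
  forall i, M i = 0%N.
Proof.
move=> xnil relM xM; apply: NNPP => /not_all_ex_not[i0 /eqP]; rewrite -lt0n => Mi0.
pose c := \prod_i x i ^+ M i.
have c_neq0 : c != 0.
  apply/prodf_neq0 => i _; rewrite expf_eq0 negb_and.
  by case: (posnP (M i)) => [_ //|/xM ->]; rewrite orbT.
pose p : {mpoly K[n]} := 'X_[[multinom M i | i < n]] - c%:MP.
suff : p.@[fun _ => 0] = 0.
  rewrite mevalB mevalC mevalX (bigD1 i0) //= mnmE expr0n gtn_eqF // mul0r sub0r.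
  by move/eqP; rewrite oppr_eq0 (negbTE c_neq0).
apply: xnil => _ [t [tT ->]]; rewrite mevalB mevalC mevalX.
under eq_bigr do rewrite mnmE.
have := orbit_monomial relM (ex_intro _ t (conj tT erefl)).
by rewrite /exprz /= => ->; rewrite subrr.
Qed.

Lemma nilpotent_supp_acyclic (x : 'I_n -> K) :
  nilpotent s x -> acyclic (ratw s) [set i | x i != 0].
Proof.
move=> xnil m relm m_ge0 mx; apply/supp_eq0 => i.
have [d d_gt0 [M M_m]] := clear_denominators m.
have M_ge0 j : 0 <= M j by rewrite -(ler0z rat) M_m mulr_ge0 // ler0z ltW.
have M0 j : (M j == 0) = (m j == 0) by rewrite -(intr_eq0 rat) M_m mulf_eq0 intr_eq0 gt_eqF.
have relN k : \sum_j s j k * (`|M j|%N)%:Z = 0.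
  by under eq_bigr do rewrite gez0_abs //; apply: int_wrel_of_scaled relm M_m k.
have xM j : (0 < `|M j|)%N -> x j != 0.
  by rewrite absz_gt0 M0 -in_supp => /(subsetP mx); rewrite inE.
by apply/eqP; rewrite -M0 -absz_eq0; apply/eqP/(nilpotent_nonneg_int_wrel xnil relN xM).
Qed.

Lemma free_char_eval_onto (J : {set 'I_n}) (y : 'I_n -> K) : wfree (ratw s) J ->
  (forall i, i \in J -> y i != 0) ->
  exists t, torus t /\ forall i, i \in J -> char_eval (s i) t = y i.
Proof.
move=> freeJ y_neq0.
have /row_freeP[B B_inv] : row_free (supp_mx (ratw s) J).
  by rewrite /row_free -rank_wmatrix; apply/eqP/wfree_rank.
have [d d_gt0 [F F_B]] := clear_denominators (fun kb : 'I_r * 'I_#|J| => B kb.1 kb.2).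
have F_inv a b : \sum_k F (k, b) * s (enum_val a) k = (a == b)%:Z * d.
  apply: (@intr_inj rat); move/matrixP: B_inv => /(_ a b); rewrite !mxE => B_ab.
  have -> : ((a == b)%:Z * d)%:~R = d%:~R * (a == b)%:R :> rat.
    by case: (a == b); rewrite ?mul1r ?mul0r ?mulr1 ?mulr0.
  rewrite -B_ab rmorph_sum mulr_sumr; apply: eq_bigr => k _.
  by rewrite rmorphM /= F_B !mxE /ratw; ring.
pose dn := `|d|%N.
have d_dn : d = dn%:Z by rewrite /dn gtz0_abs.
have dn_gt0 : (0 < dn)%N by rewrite absz_gt0 gt_eqF.
have [z z_root] := fin_all_exists (fun b : 'I_#|J| =>
  @closed_field_nth_root K dn (y (enum_val b)) dn_gt0).
have z_neq0 b : z b != 0.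
  apply: contraTneq (y_neq0 _ (enum_valP b)) => z0.
  by rewrite -z_root z0 expr0n gtn_eqF // mulr0n eqxx.
exists (fun k => \prod_b z b ^ F (k, b)); split => [k|i iJ].
  by apply/prodf_neq0 => b _; apply: expfz_neq0.
rewrite /char_eval (prod_exprz_exchange (fun k b => F (k, b)) (s i) z_neq0).
pose a := enum_rank_in iJ i.
have i_a : enum_val a = i by rewrite enum_rankK_in.
have F_i b : \sum_k F (k, b) * s i k = (a == b)%:Z * d by rewrite -i_a F_inv.
rewrite (bigD1 a) //= F_i eqxx mul1r big1 ?mulr1 => [|b ba].
  by rewrite d_dn -exprnP z_root i_a.
by rewrite F_i eq_sym (negbTE ba) mul0r expr0z.
Qed.

Theorem acyclic_free_visible :
  (forall J, acyclic (ratw s) J -> wfree (ratw s) J) -> visible K s.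
Proof.
move=> acf; pose ind (J : {set 'I_n}) i : K := if i \in J then 1 else 0.
exists [seq ind J | J <- enum [set: {set 'I_n}]] => x xnil.
have [|t [tT t_x]] := free_char_eval_onto (acf _ (nilpotent_supp_acyclic xnil)) (y := x).
  by move=> i; rewrite inE.
exists (ind [set i | x i != 0]); first by apply: In_map_mem; rewrite mem_enum in_setT.
exists t; split => //; apply: functional_extensionality => i; rewrite /tact /ind.
have [xi0|xi] := eqVneq (x i) 0; first by rewrite inE xi0 eqxx mulr0.
by rewrite inE xi mulr1 t_x // inE.
Qed.

Section CharZero.
Hypothesis K0 : [pchar K] =i pred0.

Lemma nilpotent_of_cocharacter (L : 'I_r -> int) (x : 'I_n -> K) :
  (forall i, x i != 0 -> 0 < \sum_k L k * s i k) -> nilpotent s x.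
Proof.
move=> L_pos p p_orbit.
(* q(c) is p along the orbit of the one-parameter subgroup c |-> c^L; it vanishes at all
   c != 0, hence identically, and q(0) = p(0) as the exponents are positive. *)
pose w i := \sum_k L k * s i k; pose e i := `|w i|%N.
pose q : {poly K} := \sum_(mm <- msupp p) (p@_mm)%:P * \prod_i (x i *: 'X^(e i)) ^+ mm i.
have q_eval c : q.[c] = p.@[fun i => x i * c ^+ e i].
  rewrite mevalE /q horner_sum; apply: eq_bigr => mm _.
  rewrite hornerM hornerC horner_prod; congr (_ * _); apply: eq_bigr => i _.
  by rewrite horner_exp hornerZ hornerXn.
have q0 : q = 0.
  apply: (pchar0_poly_eq0 K0) => k; rewrite q_eval; apply: p_orbit.
  have k1_neq0 : (k.+1%:R : K) != 0 by move/pcharf0P: K0 => ->.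
  exists (fun l => (k.+1%:R : K) ^ L l); split=> [l|]; first exact: expfz_neq0.
  apply: functional_extensionality => i; rewrite /tact.
  have [->|xi] := eqVneq (x i) 0; first by rewrite !mul0r mulr0.
  rewrite mulrC /char_eval; congr (_ * _); under eq_bigr do rewrite exprz_exp.
  by rewrite prod_exprz // -/(w i) -[w i]gez0_abs // ltW // L_pos.
rewrite -[RHS](@horner0 K 0) -q0 q_eval; apply: meval_eq => i /=.
have [->|xi] := eqVneq (x i) 0; first by rewrite mul0r.
by rewrite expr0n /e absz_eq0 gt_eqF ?L_pos // mulr0.
Qed.

Theorem visible_positive_free :
  visible K s -> forall J, positive_on (ratw s) J -> wfree (ratw s) J.
Proof.
case=> xs reps J [lam lam_pos] m relm mJ; apply: NNPP => /eqP m_neq0.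
have [dL dL_gt0 [L L_lam]] := clear_denominators lam.
have [dM dM_gt0 [M M_m]] := clear_denominators m.
have relM := int_wrel_of_scaled relm M_m.
have [i0 i0m] := set0Pn _ m_neq0.
have i0J := subsetP mJ _ i0m.
have Mi0 : M i0 != 0 by rewrite -(intr_eq0 rat) M_m mulf_eq0 intr_eq0 gt_eqF //= -in_supp.
have MJ i : i \notin J -> M i = 0.
  move=> iJ; apply/eqP; rewrite -(intr_eq0 rat) M_m notin_supp ?mulr0 //.
  by apply: contra iJ => /(subsetP mJ).
pose xa (a : K) i : K := if i \in J then (if i == i0 then a else 1) else 0.
have xa_nil a : nilpotent s (xa a).
  apply: (nilpotent_of_cocharacter (L := L)) => i; rewrite /xa.
  case: ifP => [iJ _|_]; last by rewrite eqxx.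
  rewrite -(ltr0z rat) rmorph_sum /=; under eq_bigr do rewrite intrM L_lam -mulrA.
  by rewrite -mulr_sumr mulr_gt0 ?ltr0z // lam_pos.
have xa_monomial c : \prod_i xa c i ^ M i = c ^ M i0.
  rewrite (bigD1 i0) //= {1}/xa i0J eqxx big1 ?mulr1 // => j ji0; rewrite /xa.
  by case: ifP => jJ; rewrite ?(negbTE ji0) ?exp1rz // MJ ?jJ // expr0z.
have vals k : (k.+1%:R : K) ^ M i0 \in [seq \prod_i y i ^ M i | y <- xs].
  have [y y_xs xa_y] := reps _ (xa_nil k.+1%:R).
  by rewrite -xa_monomial (orbit_monomial relM xa_y); apply: mem_map_In.
have vals_uniq : uniq [seq (k.+1%:R : K) ^ M i0 | k <- iota 0 (size xs).+1].
  by rewrite map_inj_uniq ?iota_uniq //; apply: pchar0_natS_exprz_inj.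
have sub_vals : {subset [seq (k.+1%:R : K) ^ M i0 | k <- iota 0 (size xs).+1]
                  <= [seq \prod_i y i ^ M i | y <- xs]}.
  by move=> _ /mapP[k _ ->]; apply: vals.
by have := uniq_leq_size vals_uniq sub_vals; rewrite !size_map size_iota ltnn.
Qed.

End CharZero.

End TorusAction.

Theorem proposition3p5 (K : closedFieldType) (hK : [pchar K] =i pred0)
  (r n : nat) (s : 'I_n -> 'I_r -> int) :
  visible K s <->
  exists (l : nat) (I : 'I_l.+1 -> {set 'I_n}),
    (* partition of {1..n} into I_0, ..., I_l *)
    (forall j1 j2, j1 != j2 -> [disjoint I j1 & I j2]) /\
    (\bigcup_(j < l.+1) I j = [set: 'I_n]) /\
    (* (i) *)
    (wmx s [set: 'I_n] == (\sum_(j < l.+1) <<wmx s (I j)>>)%MS)%MS /\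
    mxdirect (\sum_(j < l.+1) <<wmx s (I j)>>)%MS /\
    (* (ii) *)
    \rank (wmx s (I ord0)) = #|I ord0| /\
    (forall j : 'I_l.+1, j != ord0 -> (\rank (wmx s (I j))).+1 = #|I j|) /\
    (* (iii) *)
    (forall j : 'I_l.+1, j != ord0 -> zero_in_open_hull s (I j)).
Proof.
split=> [vis|[l [I part]]].
  apply: (acyclic_free_partition (v := ratw s)) => J /acyclic_positive_on.
  exact: visible_positive_free.
by apply: acyclic_free_visible; apply: (partition_acyclic_free part).
Qed.
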